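(* Fix $p^s\in\mathbb{R}$ and let $$\mathcal{E}=\{(z,p^d,p^c)\in\mathbb{R}^3:\ p^d\ge0,\ p^c\ge0,\ p^dp^c=0,\ z\ge(p^d)^2+(p^c)^2-2p^dp^s+2p^cp^s+(p^s)^2\}.$$ Then $$\mathrm{conv}(\mathcal{E})=\{(z,p^d,p^c)\in\mathbb{R}^3:\ p^d\ge0,\ p^c\ge0,\ z\ge(p^d+p^c)^2-2p^dp^s+2p^cp^s+(p^s)^2\}.$$ Equivalently, writing $x=(p^d,p^c,z)^\top$, $A=\begin{pmatrix}1&1&0\\0&0&0\\0&0&0\end{pmatrix}$, $b=(-2p^s,\,2p^s,\,-1)^\top$, $c=(p^s)^2$, the convex hull is the set of $(z,p^d,p^c)$ with $p^d,p^c\ge0$ and the second-order cone constraint $$\left\|\begin{pmatrix}\tfrac12 b^\top x+\tfrac{1+c}{2}\\ Ax\end{pmatrix}\right\|_2\le\tfrac12\left(1-b^\top x-c\right).$$ *)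

From mathcomp Require Import all_boot all_order all_algebra.
From mathcomp Require Import reals.
Set Implicit Arguments. Unset Strict Implicit. Unset Printing Implicit Defensive.
Import Order.TTheory GRing.Theory Num.Theory.
Local Open Scope ring_scope.

(* Points of R^3 are written as triples (z, pd, pc). *)
Definition pt (R : realType) := (R * R * R)%type.

Definition conv (R : realType) (S : pt R -> Prop) : pt R -> Prop :=
  fun x => exists (n : nat) (w : 'I_n -> R) (q : 'I_n -> pt R),
    [/\ (forall i, 0 <= w i), \sum_(i < n) w i = 1, (forall i, S (q i)) &
        x = (\sum_(i < n) w i * (q i).1.1,
             \sum_(i < n) w i * (q i).1.2,
             \sum_(i < n) w i * (q i).2)].

Definition Eset (R : realType) (ps : R) : pt R -> Prop :=
  fun x => let: (z, pd, pc) := x in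
    [/\ 0 <= pd, 0 <= pc, pd * pc = 0 &
        pd ^+ 2 + pc ^+ 2 - 2 * pd * ps + 2 * pc * ps + ps ^+ 2 <= z].

Definition Hset (R : realType) (ps : R) : pt R -> Prop :=
  fun x => let: (z, pd, pc) := x in
    [/\ 0 <= pd, 0 <= pc &
        (pd + pc) ^+ 2 - 2 * pd * ps + 2 * pc * ps + ps ^+ 2 <= z].

Definition SOCset (R : realType) (ps : R) : pt R -> Prop :=
  fun x => let: (z, pd, pc) := x in
    let bx := - 2 * ps * pd + 2 * ps * pc - z in
    let c := ps ^+ 2 in
    let Ax := [:: pd + pc; 0; 0] in
    [/\ 0 <= pd, 0 <= pc &
        Num.sqrt ((bx / 2 + (1 + c) / 2) ^+ 2 + \sum_(a <- Ax) a ^+ 2)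
          <= (1 - bx - c) / 2].

(* Since pd * pc = 0 on E, the defining inequality of E can be rewritten with
   (pd + pc)^2 in place of pd^2 + pc^2; the resulting function of (pd, pc) is a
   convex quadratic, so H is convex and contains E.  Conversely, a point of H
   with s = pd + pc > 0 is the (pd/s, pc/s)-combination of the two points of E
   lying over (s, 0) and (0, s) with the same excess in z.  The cone form is the
   usual rewriting of sqrt(u^2 + s^2) <= v as s^2 <= v^2 - u^2, where here
   v^2 - u^2 is linear in (z, pd, pc). *)
From mathcomp Require Import all_boot all_order all_algebra.
From mathcomp Require Import reals.
From mathcomp Require Import ring lra.
Set Implicit Arguments. Unset Strict Implicit. Unset Printing Implicit Defensive.
Import Order.TTheory GRing.Theory Num.Theory.
Local Open Scope ring_scope.

Section WeightedSums.

Variables (R : realFieldType) (n : nat) (w : 'I_n -> R).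
Hypotheses (w_ge0 : forall i, 0 <= w i) (w_sum1 : \sum_(i < n) w i = 1).

Lemma wsum_ge0 (g : 'I_n -> R) :
  (forall i, 0 <= g i) -> 0 <= \sum_(i < n) w i * g i.
Proof. by move=> g_ge0; apply: sumr_ge0 => i _; rewrite mulr_ge0. Qed.

Lemma sqr_wsum_le (g : 'I_n -> R) :
  (\sum_(i < n) w i * g i) ^+ 2 <= \sum_(i < n) w i * g i ^+ 2.
Proof.
have var_expand (m : R) : \sum_(i < n) w i * (g i - m) ^+ 2 =
    \sum_(i < n) w i * g i ^+ 2 + (- (2 * m)) * \sum_(i < n) w i * g i
    + m ^+ 2 * \sum_(i < n) w i.
  by rewrite !mulr_sumr -!big_split /=; apply: eq_bigr => i _; ring.
have := wsum_ge0 (fun i => sqr_ge0 (g i - \sum_(j < n) w j * g j)).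
rewrite var_expand w_sum1; lra.
Qed.

End WeightedSums.

Definition cost (R : realFieldType) (ps pd pc : R) : R :=
  (pd + pc) ^+ 2 - 2 * pd * ps + 2 * pc * ps + ps ^+ 2.

Lemma cost_wsum_le (R : realFieldType) (ps : R) n (w d c : 'I_n -> R) :
  (forall i, 0 <= w i) -> \sum_(i < n) w i = 1 ->
  cost ps (\sum_(i < n) w i * d i) (\sum_(i < n) w i * c i)
    <= \sum_(i < n) w i * cost ps (d i) (c i).
Proof.
move=> w_ge0 w_sum1.
have sum_dc : \sum_(i < n) w i * d i + \sum_(i < n) w i * c i =
    \sum_(i < n) w i * (d i + c i).
  by rewrite -big_split; apply: eq_bigr => i _; rewrite mulrDr.
have cost_expand : \sum_(i < n) w i * cost ps (d i) (c i) =
    \sum_(i < n) w i * (d i + c i) ^+ 2 + (- (2 * ps)) * \sum_(i < n) w i * d i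
    + 2 * ps * \sum_(i < n) w i * c i + ps ^+ 2 * \sum_(i < n) w i.
  rewrite !mulr_sumr -!big_split /=.
  by apply: eq_bigr => i _; rewrite /cost; ring.
have := sqr_wsum_le w_ge0 w_sum1 (fun i => d i + c i).
rewrite cost_expand w_sum1 /cost -sum_dc; lra.
Qed.

Lemma conv_point (R : realType) (S : pt R -> Prop) (x : pt R) :
  S x -> conv S x.
Proof.
move=> Sx; exists 1%N, (fun _ => 1), (fun _ => x).
by rewrite !big_ord1 !mul1r; split=> //; case: x {Sx} => [[]].
Qed.

Lemma conv_segment (R : realType) (S : pt R -> Prop) (p q : pt R) (t : R) :
  S p -> S q -> 0 <= t <= 1 ->
  conv S (t * p.1.1 + (1 - t) * q.1.1,
          t * p.1.2 + (1 - t) * q.1.2,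
          t * p.2 + (1 - t) * q.2).
Proof.
move=> Sp Sq /andP[t_ge0 t_le1].
exists 2%N, (fun i : 'I_2 => if val i == 0%N then t else 1 - t),
  (fun i : 'I_2 => if val i == 0%N then p else q).
rewrite !big_ord_recl !big_ord0 /= !addr0; split => //.
- by case=> -[|k] ? //=; rewrite subr_ge0.
- by rewrite addrC subrK.
- by case=> -[|k] ?.
Qed.

Lemma Eset_Hset (R : realType) (ps : R) (x : pt R) : Eset ps x -> Hset ps x.
Proof.
case: x => [[z pd] pc] [? ? pdpc0 ?]; split=> //.
by rewrite sqrrD pdpc0 mul0rn addr0.
Qed.

Lemma conv_Eset_Hset (R : realType) (ps : R) (x : pt R) :
  conv (Eset ps) x -> Hset ps x.
Proof.
case=> n [w [q [w_ge0 w_sum1 qE ->]]].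
have /all_and3[d_ge0 c_ge0 cost_le] i :
    [/\ 0 <= (q i).1.2, 0 <= (q i).2 & cost ps (q i).1.2 (q i).2 <= (q i).1.1].
  by have := Eset_Hset (qE i); case: (q i) => [[z pd] pc].
split; [exact: wsum_ge0 | exact: wsum_ge0 |].
apply: le_trans (cost_wsum_le _ _ _ w_ge0 w_sum1) _.
by apply: ler_sum => i _; rewrite ler_wpM2l.
Qed.

Lemma Hset_conv_Eset (R : realType) (ps : R) (x : pt R) :
  Hset ps x -> conv (Eset ps) x.
Proof.
case: x => [[z pd] pc] [pd_ge0 pc_ge0 cost_le].
have [s0 | s_neq0] := eqVneq (pd + pc) 0.
  have [pd0 pc0] : pd = 0 /\ pc = 0 by lra.
  apply: conv_point; split; rewrite ?pd0 ?pc0 ?mulr0 //.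
  by move: cost_le; rewrite pd0 pc0 /cost; lra.
set s := pd + pc; set dl := z - cost ps pd pc; set t := pd / s.
have s_gt0 : 0 < s by rewrite lt_def s_neq0 addr_ge0.
have t_01 : 0 <= t <= 1.
  by rewrite divr_ge0 ?(ltW s_gt0) //= ler_pdivrMr // mul1r lerDl.
have E_dl pd' pc' : 0 <= pd' -> 0 <= pc' -> pd' * pc' = 0 ->
    Eset ps (cost ps pd' pc' + dl, pd', pc').
  move=> pd'_ge0 pc'_ge0 pdpc0; split=> //.
  by rewrite /cost sqrrD pdpc0 mul0rn addr0 lerDl subr_ge0.
have -> : (z, pd, pc) = (t * (cost ps s 0 + dl) + (1 - t) * (cost ps 0 s + dl),
                         t * s + (1 - t) * 0, t * 0 + (1 - t) * s) :> pt R.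
  by congr (_, _, _); rewrite /t /dl /cost /s; field.
apply: (conv_segment (p := (cost ps s 0 + dl, s, 0)) (q := (cost ps 0 s + dl, 0, s))).
- by apply: E_dl; rewrite ?mulr0 ?(ltW s_gt0).
- by apply: E_dl; rewrite ?mul0r ?(ltW s_gt0).
- exact: t_01.
Qed.

Lemma sqrtr_le (R : rcfType) (a v : R) :
  (Num.sqrt a <= v) = (0 <= v) && (a <= v ^+ 2).
Proof.
case: sqrtrP => [a_lt0 | b b_ge0].
  by rewrite andb_idr // => _; rewrite ltW // (lt_le_trans a_lt0) ?sqr_ge0.
have [v_ge0 | v_lt0] := leP 0 v; first by rewrite ler_sqr.
by apply/negbTE; rewrite -ltNge (lt_le_trans v_lt0).
Qed.

Lemma Hset_SOCset (R : realType) (ps : R) (x : pt R) :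
  Hset ps x <-> SOCset ps x.
Proof.
case: x => [[z pd] pc]; rewrite /SOCset !big_cons big_nil expr0n /= !addr0.
split=> -[pd_ge0 pc_ge0 le_z]; split=> //.
  by rewrite sqrtr_le; apply/andP; split; nra.
by move: le_z; rewrite sqrtr_le => /andP[_]; lra.
Qed.

Theorem theorem2 (R : realType) (ps : R) :
  (forall x : pt R, conv (Eset ps) x <-> Hset ps x) /\
  (forall x : pt R, conv (Eset ps) x <-> SOCset ps x).
Proof.
have conv_Eset_eq x : conv (Eset ps) x <-> Hset ps x.
  by split; [exact: conv_Eset_Hset | exact: Hset_conv_Eset].
by split=> // x; rewrite -Hset_SOCset.
Qed.
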